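(* Let $\Omega\subseteq\mathbb{R}^2$ be open and let $s:\Omega\to\mathbb{R}^n$ be a smooth surface. For a nondegenerate triangle with vertices $a,b,c\in\mathbb{R}^2$ let $a'$ be the mirror vertex of $a$ (the reflection of $a$ across the line through $b$ and $c$). For points $p,q,r$ in a Euclidean space write $\langle p;q;r\rangle=p\wedge q+q\wedge r+r\wedge p$. Then for every $x\in\Omega$, $$\lim \frac{1}{\big[\langle a;b;c\rangle-\langle a';b;c\rangle\big]\cdot\mathbb{I}_2}\Big[\langle s(a);s(b);s(c)\rangle-\langle s(a');s(b);s(c)\rangle\Big] \;=\; \partial_{1}s(x)\wedge\partial_{2}s(x),$$ where the limit is taken as $(a,b,c)\to(x,x,x)$ in $\mathbb{R}^2\times\mathbb{R}^2\times\mathbb{R}^2$ over triples such that the triangle $a,b,c$ is nondegenerate (i.e. $a\wedge b+b\wedge c+c\wedge a\neq 0$) and $a'$ is a balanced mirror vertex of that triangle (with $a,b,c,a'\in\Omega$), and the convergence is in the space of bivectors $\Lambda^2\mathbb{R}^n$.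
   Context: $\wedge$ denotes the exterior (outer) product; bivectors in $\mathbb{R}^n$ are elements of $\Lambda^2\mathbb{R}^n$, with the Euclidean structure in which $\{h_j\wedge h_k\}_{j<k}$ is orthonormal for an orthonormal basis $\{h_1,\dots,h_n\}$ of $\mathbb{R}^n$. For an orthonormal basis $\{\ell_1,\ell_2\}$ of $\mathbb{R}^2$, $\mathbb{I}_2=\ell_1\wedge\ell_2$ and for a bivector $B=\beta\,\ell_1\wedge\ell_2$ in $\mathbb{R}^2$, $B\cdot\mathbb{I}_2=\beta$; note $\langle a;b;c\rangle-\langle a';b;c\rangle=(a'-a)\wedge(c-b)$. $\partial_i s(x)=\sum_j \partial_{\ell_i}\sigma_j(x)\,h_j$ where $\sigma_j=s\cdot h_j$. A real function $\psi:\Omega\to\mathbb{R}$ is smooth if it is $C^2$ on $\Omega$ and the eigenvalues of its Hessian are bounded in absolute value uniformly on $\Omega$; a surface $s:\Omega\to\mathbb{R}^n$ is smooth if every component $\sigma_j$ is a smooth function. The mirror vertex of $a$ in the nondegenerate triangle $a,b,c$ is $a'=-\big[a+2b\frac{(a-c)\cdot(c-b)}{|c-b|^2}+2c\frac{(b-a)\cdot(c-b)}{|c-b|^2}\big]$; it is balanced if $\bar a=\frac12(a+a')$ lies in the closed segment $[b,c]$. *)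

From HB Require Import structures.
From mathcomp Require Import all_boot all_order all_algebra.
From mathcomp Require Import all_classical all_reals all_analysis.
Set Implicit Arguments. Unset Strict Implicit. Unset Printing Implicit Defensive.
Import Order.TTheory GRing.Theory Num.Theory.
Import numFieldNormedType.Exports.
Local Open Scope classical_set_scope.
Local Open Scope ring_scope.

Section Defs.
Variable R : realType.

(* A bivector of Lambda^2 R^m is
   represented by an antisymmetric m x m matrix B; its coordinate on the
   orthonormal basis vector h_j /\ h_k (j < k) is B j k. *)
Definition wedge (m : nat) (u v : 'rV[R]_m) : 'M[R]_m :=
  \matrix_(j, k) (u ord0 j * v ord0 k - u ord0 k * v ord0 j).

Definition tri (m : nat) (p q r : 'rV[R]_m) : 'M[R]_m :=
  wedge p q + wedge q r + wedge r p.

(* For a bivector B = beta l1/\l2 of R^2, B . I_2 = beta. *)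
Definition dotI2 (B : 'M[R]_2) : R := B ord0 (@Ordinal 2 1 isT).

Definition dot2 (u v : 'rV[R]_2) : R := \sum_(i < 2) u ord0 i * v ord0 i.

Definition mirror (a b c : 'rV[R]_2) : 'rV[R]_2 :=
  - (a + ((2 * dot2 (a - c) (c - b)) / dot2 (c - b) (c - b)) *: b
       + ((2 * dot2 (b - a) (c - b)) / dot2 (c - b) (c - b)) *: c).

Definition nondegenerate_triangle (a b c : 'rV[R]_2) : Prop := tri a b c != 0.

Definition balanced_mirror (a b c : 'rV[R]_2) : Prop :=
  exists2 t : R, 0 <= t <= 1 &
    (2%:R^-1) *: (a + mirror a b c) = (1 - t) *: b + t *: c.

Definition partial (i : 'I_2) (f : 'rV[R]_2 -> R) (x : 'rV[R]_2) : R :=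
  derive f x (delta_mx ord0 i).

Definition hessian (f : 'rV[R]_2 -> R) (x : 'rV[R]_2) : 'M[R]_2 :=
  \matrix_(i, j) partial j (partial i f) x.

Definition smooth_fun (Omega : set 'rV[R]_2) (f : 'rV[R]_2 -> R) : Prop :=
  [/\ (forall x, Omega x -> differentiable f x),
      (forall i x, Omega x -> differentiable (partial i f) x),
      (forall i j x, Omega x -> {for x, continuous (partial j (partial i f))}) &
      exists M : R, forall x, Omega x -> forall lam : R,
        eigenvalue (hessian f x) lam -> `|lam| <= M].

Definition smooth_surface (n : nat) (Omega : set 'rV[R]_2)
  (s : 'rV[R]_2 -> 'rV[R]_n) : Prop :=
  forall j : 'I_n, smooth_fun Omega (fun x => s x ord0 j).

Definition partial_s (n : nat) (i : 'I_2) (s : 'rV[R]_2 -> 'rV[R]_n)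
  (x : 'rV[R]_2) : 'rV[R]_n :=
  \row_j partial i (fun y => s y ord0 j) x.

End Defs.

(* Euclidean-space distance in R^2 (any norm gives the same limit notion;
   here the canonical max norm of MathComp-Analysis on row vectors). *)
Definition dist2 {R : realType} (u v : 'rV[R]_2) : R := `|u - v|%R.

From HB Require Import structures.
From mathcomp Require Import all_boot all_order all_algebra.
From mathcomp Require Import all_classical all_reals all_analysis.
From mathcomp Require Import ring lra.
Set Implicit Arguments. Unset Strict Implicit. Unset Printing Implicit Defensive.
Import Order.TTheory GRing.Theory Num.Theory.
Import numFieldNormedType.Exports.
Local Open Scope classical_set_scope.
Local Open Scope ring_scope.

(* Put w = a' - a and f = c - b.  The denominator is cross2 w f, and the (j, k)
   entry of the numerator is the 2x2 determinant of the increments of sigma_j and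
   sigma_k along w and along f.  Continuity of the partial derivatives at x makes
   each increment the gradient at x applied to w (resp. f) up to o(|w|) (resp.
   o(|f|)); by the Binet-Cauchy identity the linearised determinant is exactly
   cross2 (grad sigma_j) (grad sigma_k) * cross2 w f, so the error of the quotient
   is o(|w| |f| / |cross2 w f|).  Since a' is a mirror image, w is orthogonal to
   f, hence |w| |f| <= 2 |cross2 w f|; balancedness keeps a' close to x. *)

Local Notation i1 := (@Ordinal 2 1 isT).

Lemma ord2P (P : 'I_2 -> Prop) : P ord0 -> P i1 -> forall i, P i.
Proof.
move=> P0 P1 i.
by have [->|->] : i = ord0 \/ i = i1 by case: i => [[|[|//]] ?]; [left | right]; apply/val_inj.
Qed.

Lemma mul_approx_le {R : realFieldType} {x x' y y' C e m m' : R} :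
  0 <= C -> 0 <= e <= 1 -> 0 <= m -> 0 <= m' ->
  `|x'| <= C * m -> `|y'| <= C * m' ->
  `|x - x'| <= e * m -> `|y - y'| <= e * m' ->
  `|x * y - x' * y'| <= (2 * C + 1) * e * (m * m').
Proof.
move=> C0 /andP[e0 e1] m0 m'0 hx' hy' hx hy.
have -> : x * y - x' * y' = (x - x') * y' + x' * (y - y') + (x - x') * (y - y') by ring.
have b1 : `|(x - x') * y'| <= e * m * (C * m') by rewrite normrM; apply: ler_pM.
have b2 : `|x' * (y - y')| <= C * m * (e * m') by rewrite normrM; apply: ler_pM.
have b3 : `|(x - x') * (y - y')| <= e * m * (e * m') by rewrite normrM; apply: ler_pM.
have ee : e * e * (m * m') <= e * (m * m') by rewrite ler_wpM2r ?mulr_ge0 //; nra.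
apply: le_trans (ler_normD _ _) _; apply: le_trans (lerD (ler_normD _ _) b3) _.
by move: (lerD b1 b2); nra.
Qed.

Section Plane.
Variable R : realType.
Implicit Types u v w f p q : 'rV[R]_2.

Definition cross2 u v : R := u ord0 ord0 * v ord0 i1 - u ord0 i1 * v ord0 ord0.

Definition norm1 u : R := `|u ord0 ord0| + `|u ord0 i1|.

Lemma dot2E u v : dot2 u v = u ord0 ord0 * v ord0 ord0 + u ord0 i1 * v ord0 i1.
Proof.
rewrite /dot2 !big_ord_recr big_ord0 /= add0r.
have -> : widen_ord (leqnSn 1) ord_max = ord0 :> 'I_2 by apply/val_inj.
by have -> : ord_max = i1 :> 'I_2 by apply/val_inj.
Qed.

Lemma norm1_ge0 u : 0 <= norm1 u.
Proof. exact: addr_ge0. Qed.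

Lemma dot2_norm1_le p u : `|dot2 p u| <= norm1 p * norm1 u.
Proof.
rewrite dot2E /norm1; apply: le_trans (ler_normD _ _) _; rewrite !normrM.
have := normr_ge0 (p ord0 ord0); have := normr_ge0 (p ord0 i1).
have := normr_ge0 (u ord0 ord0); have := normr_ge0 (u ord0 i1); nra.
Qed.

Lemma dot2_eq0 u : dot2 u u = 0 -> u = 0.
Proof.
rewrite dot2E => uu0; have u0 : u ord0 ord0 = 0 by nra.
have u1 : u ord0 i1 = 0 by nra.
by apply/rowP; apply: ord2P; rewrite mxE.
Qed.

Lemma dot2_cross2 p q w f :
  dot2 p w * dot2 q f - dot2 q w * dot2 p f = cross2 p q * cross2 w f.
Proof. by rewrite !dot2E /cross2; ring. Qed.

(* For orthogonal [w] and [f], |cross2 w f| is the product of the Euclidean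
   norms, which dominates half the product of the l1 norms. *)
Lemma norm1M_le_cross2 w f :
  dot2 w f = 0 -> norm1 w * norm1 f <= 2 * `|cross2 w f|.
Proof.
rewrite dot2E /norm1 /cross2 => wf0.
move: (w ord0 ord0) (w ord0 i1) (f ord0 ord0) (f ord0 i1) wf0 => w0 w1 f0 f1 wf0.
have lagrange : (w0 * f1 - w1 * f0) ^+ 2 = (w0 ^+ 2 + w1 ^+ 2) * (f0 ^+ 2 + f1 ^+ 2).
  have -> : (w0 ^+ 2 + w1 ^+ 2) * (f0 ^+ 2 + f1 ^+ 2) =
      (w0 * f1 - w1 * f0) ^+ 2 + (w0 * f0 + w1 * f1) ^+ 2 by ring.
  by rewrite wf0 expr0n addr0.
rewrite -ler_sqr ?nnegrE ?mulr_ge0 ?addr_ge0 //.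
rewrite !exprMn real_normK ?num_real // lagrange.
have := real_normK (num_real w0); have := real_normK (num_real w1).
have := real_normK (num_real f0); have := real_normK (num_real f1).
have := normr_ge0 w0; have := normr_ge0 w1; have := normr_ge0 f0; have := normr_ge0 f1.
move: `|w0| `|w1| `|f0| `|f1| => W0 W1 F0 F1 F1p F0p W1p W0p <- <- <- <-.
have hW : (W0 + W1) ^+ 2 <= 2 * (W0 ^+ 2 + W1 ^+ 2) by have := sqr_ge0 (W0 - W1); nra.
have hF : (F0 + F1) ^+ 2 <= 2 * (F0 ^+ 2 + F1 ^+ 2) by have := sqr_ge0 (F0 - F1); nra.
apply: le_trans (ler_pM _ _ hW hF) _; rewrite ?sqr_ge0 //.
rewrite (_ : (2 : R) ^+ 2 = 4); first lra.
by rewrite expr2; lra.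
Qed.

Lemma cross2_ratio_le p q w f (uj uk vj vk C e : R) :
  dot2 w f = 0 -> cross2 w f != 0 -> norm1 p <= C -> norm1 q <= C -> 0 <= e <= 1 ->
  `|uj - dot2 p w| <= e * norm1 w -> `|uk - dot2 q w| <= e * norm1 w ->
  `|vj - dot2 p f| <= e * norm1 f -> `|vk - dot2 q f| <= e * norm1 f ->
  `|(cross2 w f)^-1 * (uj * vk - uk * vj) - cross2 p q| <= 4 * (2 * C + 1) * e.
Proof.
move=> wf0 D0 pC qC e01 huj huk hvj hvk.
have C0 : 0 <= C := le_trans (norm1_ge0 p) pC.
have dotC r z : norm1 r <= C -> `|dot2 r z| <= C * norm1 z.
  by move=> rC; apply: le_trans (dot2_norm1_le r z) _; rewrite ler_wpM2r ?norm1_ge0.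
have E1 := mul_approx_le C0 e01 (norm1_ge0 w) (norm1_ge0 f) (dotC _ _ pC) (dotC _ _ qC) huj hvk.
have E2 := mul_approx_le C0 e01 (norm1_ge0 w) (norm1_ge0 f) (dotC _ _ qC) (dotC _ _ pC) huk hvj.
have -> : (cross2 w f)^-1 * (uj * vk - uk * vj) - cross2 p q =
    ((uj * vk - dot2 p w * dot2 q f) - (uk * vj - dot2 q w * dot2 p f)) / cross2 w f.
  by rewrite -[cross2 p q](mulfK D0) -dot2_cross2; field.
rewrite normrM normfV ler_pdivrMr ?normr_gt0 //.
apply: le_trans (ler_normB _ _) _; apply: le_trans (lerD E1 E2) _.
have Ce : 0 <= (2 * C + 1) * e by case/andP: e01 => e0 _; rewrite mulr_ge0 //; lra.
have := norm1M_le_cross2 wf0; nra.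
Qed.

End Plane.

Section Triangles.
Variable R : realType.
Implicit Types a b c : 'rV[R]_2.

Lemma tri_subl m (p p' q r : 'rV[R]_m) : tri p q r - tri p' q r = wedge (p' - p) (r - q).
Proof. by apply/matrixP => j k; rewrite !mxE; ring. Qed.

Lemma dotI2_wedge (u v : 'rV[R]_2) : dotI2 (wedge u v) = cross2 u v.
Proof. by rewrite /dotI2 mxE. Qed.

Lemma nondegenerate_dotI2 a b c : nondegenerate_triangle a b c -> dotI2 (tri a b c) != 0.
Proof.
apply: contraNneq; rewrite /dotI2 !mxE => t01; apply/eqP/matrixP.
by apply: ord2P; apply: ord2P; rewrite !mxE; lra.
Qed.

Lemma nondegenerate_side a b c : nondegenerate_triangle a b c -> dot2 (c - b) (c - b) != 0.
Proof.
apply: contraNneq => /dot2_eq0/eqP; rewrite subr_eq0 => /eqP ->.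
by apply/eqP/matrixP => j k; rewrite !mxE; ring.
Qed.

Section Mirror.
Variables a b c : 'rV[R]_2.
Hypothesis bc0 : dot2 (c - b) (c - b) != 0.

Lemma mirror_subr_dot : dot2 (mirror a b c - a) (c - b) = 0.
Proof. by move: bc0; rewrite !dot2E !mxE !dot2E !mxE => ?; field. Qed.

Lemma mirror_subr_cross : cross2 (mirror a b c - a) (c - b) = 2 * dotI2 (tri a b c).
Proof. by move: bc0; rewrite /cross2 /dotI2 !mxE !dot2E !mxE => ?; field. Qed.

End Mirror.

(* A balanced mirror vertex is [2 abar - a] with [abar] on the segment [b, c]. *)
Lemma balanced_mirror_dist a b c x d :
  balanced_mirror a b c -> `|a - x| < d -> `|b - x| < d -> `|c - x| < d ->
  `|mirror a b c - x| < 3 * d.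
Proof.
move=> [t /andP[t0 t1] E] ax bx cx.
have Em : mirror a b c = 2 *: ((1 - t) *: b + t *: c) - a.
  by rewrite -E scalerA divff ?pnatr_eq0 // scale1r addrC addKr.
have -> : mirror a b c - x = (2 * (1 - t)) *: (b - x) + (2 * t) *: (c - x) - (a - x).
  by rewrite Em; apply/rowP => i; rewrite !mxE; ring.
apply: le_lt_trans (ler_normB _ _) _; apply: le_lt_trans (lerD (ler_normD _ _) (lexx _)) _.
rewrite !normrZ !ger0_norm ?mulr_ge0 ?subr_ge0 //.
have := normr_ge0 (b - x); have := normr_ge0 (c - x); nra.
Qed.

End Triangles.

Section Increments.
Variable R : realType.

Definition grad (f : 'rV[R]_2 -> R) (x : 'rV[R]_2) : 'rV[R]_2 := \row_i partial i f x.

Lemma ball_row_entry m (x y : 'rV[R]_m) r i : ball x r y -> `|x ord0 i - y ord0 i| < r.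
Proof.
rewrite -ball_normE /ball_ /=; apply: le_lt_trans.
have -> : x ord0 i - y ord0 i = (x - y) ord0 i by rewrite !mxE.
by rewrite [leRHS]/Num.Def.normr /= mx_normrE; apply/bigmax_geP; right; exists (ord0, i).
Qed.

Lemma row_entries_ball m (x y : 'rV[R]_m) r :
  0 < r -> (forall i, `|x ord0 i - y ord0 i| < r) -> ball x r y.
Proof.
move=> r0 xy; rewrite -ball_normE /ball_ /Num.Def.normr /= mx_normrE.
by apply: bigmax_lt => // -[i j] _ /=; rewrite (ord1 i) !mxE.
Qed.

Lemma is_derive_line (f : 'rV[R]_2 -> R) p v t :
  derivable f (t *: v + p) v ->
  is_derive t 1 (fun h => f (h *: v + p)) (derive f (t *: v + p) v).
Proof.
move=> df.
have E : (fun h : R => h^-1 *: (((fun h => f (h *: v + p)) \o shift t) (h *: 1) - f (t *: v + p)))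
   = (fun h => h^-1 *: ((f \o shift (t *: v + p)) (h *: v) - f (t *: v + p))).
  apply/funext => h /=; congr (_ *: (f _ - _)).
  by rewrite /shift /= [_%:A]mulr1 scalerDl addrA.
by split; rewrite /derivable /derive E.
Qed.

Lemma line_increment_le (f : 'rV[R]_2 -> R) p v T L e :
  (forall t, (0 <= t <= T) \/ (T <= t <= 0) ->
     differentiable f (t *: v + p) /\ `|derive f (t *: v + p) v - L| <= e) ->
  `|f (T *: v + p) - f p - T * L| <= e * `|T|.
Proof.
move=> H; pose g h := f (h *: v + p).
rewrite -[f p](congr1 f (add0r p)) -(scale0r v) -/(g T) -/(g 0).
have g_derive t : (0 <= t <= T) \/ (T <= t <= 0) -> is_derive t 1 g (derive f (t *: v + p) v).
  by move=> /H[ft _]; apply/is_derive_line/diff_derivable.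
have g_cont u w : (forall t, u <= t <= w -> (0 <= t <= T) \/ (T <= t <= 0)) ->
    {within `[u, w], continuous g}.
  move=> uw; apply: derivable_within_continuous => t; rewrite in_itv => /uw.
  by move=> /g_derive[].
have open_closed (u w t : R) : t \in `]u, w[ -> u <= t <= w.
  by rewrite in_itv /= => /andP[ut tw]; rewrite !ltW.
have [T0 | T0] := leP 0 T.
- have [t t0T ->] := MVT_segment T0 (fun t tin => g_derive t (or_introl (open_closed _ _ _ tin)))
    (g_cont 0 T (fun t h => or_introl h)).
  move: t0T; rewrite in_itv => /(or_introl (B := _)) /H[_ ht].
  by rewrite subr0 [T * L]mulrC -mulrBl normrM (ger0_norm T0) ler_wpM2r.
- have [t tT0 Et] := MVT_segment (ltW T0)
    (fun t tin => g_derive t (or_intror (open_closed _ _ _ tin)))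
    (g_cont T 0 (fun t h => or_intror h)).
  move: tT0; rewrite in_itv => /(or_intror (A := _)) /H[_ ht].
  rewrite -[g T - g 0]opprB Et sub0r mulrN opprK [T * L]mulrC -mulrBl normrM.
  by rewrite ler_wpM2r.
Qed.

(* Strict differentiability from the continuity of the partial derivatives:
   go from [z] to [y] along the two coordinate directions and apply the
   mean value theorem on each leg. *)
Lemma increment_grad_le (f : 'rV[R]_2 -> R) x r e :
  (forall y, ball x r y ->
     differentiable f y /\ forall i, `|partial i f y - partial i f x| <= e) ->
  forall y z, ball x r y -> ball x r z ->
  `|f y - f z - dot2 (grad f x) (y - z)| <= e * norm1 (y - z).
Proof.
move=> near_x y z xy xz.
have r0 : 0 < r := le_lt_trans (normr_ge0 _) (ball_row_entry ord0 xy).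
have box (q : 'rV[R]_2) : (forall i, `|x ord0 i - q ord0 i| < r) ->
    differentiable f q /\ forall i, `|partial i f q - partial i f x| <= e.
  by move=> xq; apply/near_x/row_entries_ball.
have between (c u w t : R) : `|c - u| < r -> `|c - w| < r ->
    (0 <= t <= w - u) \/ (w - u <= t <= 0) -> `|c - (t + u)| < r.
  rewrite !ltr_norml => /andP[? ?] /andP[? ?] [/andP[? ?]|/andP[? ?]];
    apply/andP; split; lra.
pose T0 := y ord0 ord0 - z ord0 ord0; pose T1 := y ord0 i1 - z ord0 i1.
pose p := T1 *: delta_mx ord0 i1 + z.
have yE : y = T0 *: delta_mx ord0 ord0 + p.
  by apply/rowP; apply: ord2P; rewrite !mxE /= /T0 /T1; ring.
have leg1 : `|f p - f z - T1 * partial i1 f x| <= e * `|T1|.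
  apply: line_increment_le => t tT1.
  have [|fd fe] := box (t *: delta_mx ord0 i1 + z); last by split; last exact: fe.
  apply: ord2P; rewrite !mxE /= ?mulr0 ?add0r ?mulr1; first exact: ball_row_entry.
  exact: between (ball_row_entry _ xz) (ball_row_entry _ xy) tT1.
have leg0 : `|f y - f p - T0 * partial ord0 f x| <= e * `|T0|.
  rewrite {1}yE; apply: line_increment_le => t tT0.
  have [|fd fe] := box (t *: delta_mx ord0 ord0 + p); last by split; last exact: fe.
  apply: ord2P; rewrite !mxE /= ?mulr0 ?add0r ?mulr1.
    exact: between (ball_row_entry _ xz) (ball_row_entry _ xy) tT0.
  by rewrite /T1 subrK; exact: ball_row_entry.
have -> : f y - f z - dot2 (grad f x) (y - z) =
    (f y - f p - T0 * partial ord0 f x) + (f p - f z - T1 * partial i1 f x).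
  by rewrite dot2E !mxE /T0 /T1; ring.
rewrite /norm1 !mxE mulrDr; exact: le_trans (ler_normD _ _) (lerD leg0 leg1).
Qed.

End Increments.

Definition component (R : realType) n (s : 'rV[R]_2 -> 'rV[R]_n) (j : 'I_n)
  (y : 'rV[R]_2) : R := s y ord0 j.

Lemma smooth_surface_near (R : realType) n (Omega : set 'rV[R]_2) (s : 'rV[R]_2 -> 'rV[R]_n)
    x e : open Omega -> smooth_surface Omega s -> Omega x -> 0 < e ->
  exists2 r : R, 0 < r & forall y, ball x r y ->
    forall j, differentiable (component s j) y /\
      forall i, `|partial i (component s j) y - partial i (component s j) x| <= e.
Proof.
move=> Omega_open s_smooth Ox e0.
have near_partial j i :
    \forall y \near x, `|partial i (component s j) y - partial i (component s j) x| <= e.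
  have [_ dpartial _ _] := s_smooth j.
  move: (differentiable_continuous (dpartial i x Ox)) => /cvgrPdist_le /(_ e e0).
  by apply: filterS => y; rewrite distrC.
have near_diff j : \forall y \near x, differentiable (component s j) y.
  have [diff _ _ _] := s_smooth j.
  by apply: filterS (open_nbhs_nbhs (conj Omega_open Ox)) => y /diff.
have near_j j : \forall y \near x, differentiable (component s j) y /\
    forall i, `|partial i (component s j) y - partial i (component s j) x| <= e.
  exact: filterI (near_diff j) (filter_forall _ (near_partial j)).
by have [r r0 Hr] := iffLR (nbhs_ballP _ _) (filter_forall _ near_j); exists r.
Qed.

Lemma mirror_quotient_entry_le (R : realType) n (s : 'rV[R]_2 -> 'rV[R]_n) x r e C
    a b c j k :
  (forall y, ball x r y -> forall l, differentiable (component s l) y /\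
     forall i, `|partial i (component s l) y - partial i (component s l) x| <= e) ->
  (forall l, norm1 (grad (component s l) x) <= C) -> 0 <= e <= 1 ->
  ball x r a -> ball x r b -> ball x r c -> ball x r (mirror a b c) ->
  nondegenerate_triangle a b c ->
  `| ((dotI2 (tri a b c - tri (mirror a b c) b c))^-1 *:
        (tri (s a) (s b) (s c) - tri (s (mirror a b c)) (s b) (s c))) j k
     - wedge (partial_s ord0 s x) (partial_s i1 s x) j k | <= 4 * (2 * C + 1) * e.
Proof.
move=> near_x gradC e01 xa xb xc xa' abc_nd.
have approx l y z : ball x r y -> ball x r z ->
    `|component s l y - component s l z - dot2 (grad (component s l) x) (y - z)|
    <= e * norm1 (y - z).
  by apply: increment_grad_le => q /near_x /(_ l).
have bc0 := nondegenerate_side abc_nd.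
have D0 : cross2 (mirror a b c - a) (c - b) != 0.
  by rewrite mirror_subr_cross // mulf_neq0 ?pnatr_eq0 // nondegenerate_dotI2.
have -> : wedge (partial_s ord0 s x) (partial_s i1 s x) j k =
    cross2 (grad (component s j) x) (grad (component s k) x).
  by rewrite /cross2 !mxE (mulrC (partial i1 (component s j) x)).
rewrite (tri_subl a (mirror a b c)) (tri_subl (s a)) dotI2_wedge !mxE.
by apply: (cross2_ratio_le (mirror_subr_dot _ bc0) D0 (gradC j) (gradC k) e01);
  apply: approx.
Qed.

Theorem theorem2 (R : realType) (n : nat) (Omega : set 'rV[R]_2)
  (s : 'rV[R]_2 -> 'rV[R]_n) :
  open Omega -> smooth_surface Omega s ->
  forall x, Omega x ->
  forall eps : R, 0 < eps -> exists2 delta : R, 0 < delta &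
    forall a b c : 'rV[R]_2,
      dist2 a x < delta -> dist2 b x < delta -> dist2 c x < delta ->
      Omega a -> Omega b -> Omega c -> Omega (mirror a b c) ->
      nondegenerate_triangle a b c -> balanced_mirror a b c ->
      forall j k : 'I_n,
        `| ((dotI2 (tri a b c - tri (mirror a b c) b c))^-1 *:
              (tri (s a) (s b) (s c) - tri (s (mirror a b c)) (s b) (s c))) j k
           - wedge (partial_s ord0 s x) (partial_s (@Ordinal 2 1 isT) s x) j k |
        < eps.
Proof.
move=> Omega_open s_smooth x Ox eps eps0.
pose C := \sum_j norm1 (grad (component s j) x).
have gradC j : norm1 (grad (component s j) x) <= C.
  by rewrite /C (bigD1 j) //= lerDl sumr_ge0 // => l _; exact: norm1_ge0.
have C0 : 0 <= C by apply: sumr_ge0 => l _; exact: norm1_ge0.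
pose e := Num.min 1 (eps / (8 * (2 * C + 1))).
have e0 : 0 < e by rewrite lt_min ltr01 divr_gt0 //; lra.
have e_eps : 4 * (2 * C + 1) * e < eps.
  have : e <= eps / (8 * (2 * C + 1)) by rewrite ge_min lexx orbT.
  rewrite ler_pdivlMr; lra.
have e01 : 0 <= e <= 1 by rewrite ltW //= ge_min lexx.
have [r r0 near_x] := smooth_surface_near Omega_open s_smooth Ox e0.
exists (r / 3); first by rewrite divr_gt0.
move=> a b c ax bx cx _ _ _ _ abc_nd balanced j k.
have in_ball y : `|y - x| < r / 3 -> ball x r y.
  by rewrite -ball_normE /ball_ /= distrC => yx; lra.
have xa' : ball x r (mirror a b c).
  rewrite -ball_normE /ball_ /= distrC (_ : r = 3 * (r / 3)); last by field.
  exact: balanced_mirror_dist.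
apply: le_lt_trans (mirror_quotient_entry_le j k near_x gradC e01 _ _ _ xa' abc_nd) e_eps.
all: exact: in_ball.
Qed.
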